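(* For all $0<q<1$, the Chern character of the Fredholm module $(\mathcal{A}(S^2_q),\mathcal{H},F)$ associated to the spectral triple $(\mathcal{A}(S^2_q),\mathcal{H},D)$ pairs with the class of the projector $$p'=\frac{1}{2}\begin{pmatrix}1+b & a^* \\ a & 1-q^{-2}b\end{pmatrix}\in\mathcal{A}(S^2_q)\otimes\mathrm{Mat}_2(\mathbb{C})$$ to give $\mathrm{ch}^F([p'])=-1$. In particular the Chern character of this spectral triple is non-trivial.
   Context: Let $0<q<1$ and let $\mathcal{A}(S^2_q)$ be the $*$-algebra of the equatorial Podleś sphere, generated by $a,a^*$ and $b=b^*$ with relations $ba=q^2ab$, $a^*a+b^2=1$, $q^4aa^*+b^2=q^4$. Let $\hat{\mathcal{H}}$ be the Hilbert space with orthonormal basis $\ket{l,m}$, $l\in\mathbb{N}+\tfrac12$, $m=-l,\dots,l$, and $\mathcal{H}=\hat{\mathcal{H}}\otimes\mathbb{C}^2=\mathcal{H}_+\oplus\mathcal{H}_-$. Let $\pi=\pi_+\oplus\pi_-$ be the spin representation of Dąbrowski–Landi–Paschke–Sitarz, where with $[x]=(q^x-q^{-x})/(q-q^{-1})$, $\pi_\pm(a)\ket{l,m}=q^{m-l-\frac12}\frac{\sqrt{[l+m+1][l+m+2]}}{[2l+2]}\ket{l+1,m+1}-q^{m+l+\frac12}\frac{\sqrt{[l-m-1][l-m]}}{[2l]}\ket{l-1,m+1}\pm\frac{(1+q^2)q^{m-\frac12}}{[2l][2l+2]}\sqrt{[l+m+1][l-m]}\ket{l,m+1}$, $\pi_\pm(b)\ket{l,m}=-q^{m+1}\frac{\sqrt{[l+m+1][l-m+1]}}{[2l+2]}\ket{l+1,m}-q^{m+1}\frac{\sqrt{[l+m][l-m]}}{[2l]}\ket{l-1,m}\pm\frac{[l-m+1][l+m]-q^2[l-m][l+m+1]}{[2l][2l+2]}\ket{l,m}$.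 The Dirac operator is $D=|D|\otimes F$ with $|D|\ket{l,m}=(l+\tfrac12)\ket{l,m}$ and $F=\begin{pmatrix}0&1\\1&0\end{pmatrix}$, grading $\gamma=\mathrm{diag}(1,-1)$. With $\rho_-=(\pi_+-\pi_-)/2$, the commutator $[F,\pi(x)]=2\rho_-(x)\otimes\begin{pmatrix}0&-1\\1&0\end{pmatrix}$ is trace class, so the cocycle $\mathrm{ch}^F_0(x)=\tfrac12\mathrm{Trace}(\gamma F[F,\pi(x)])=2\,\mathrm{Trace}_{\hat{\mathcal{H}}}\rho_-(x)$ is well defined, and its pairing with $[p']$ equals the index of $p'Fp'$. *)

From Stdlib Require Import Reals Lra Bool.
From Coquelicot Require Import Coquelicot.
Open Scope R_scope.
Open Scope bool_scope.
Open Scope R_scope.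

Definition qnum (q x : R) : R := (Rpower q x - Rpower q (- x)) / (q - / q).

(** Orthonormal basis |l,m> of \hat H, l in N + 1/2, m = -l..l,
    indexed by (n,k) with l = n + 1/2 and m = k - l, 0 <= k <= 2n+1. *)
Definition lval (n : nat) : R := INR n + / 2.
Definition mval (n k : nat) : R := INR k - lval n.
Definition valid (n k : nat) : bool := Nat.leb k (2 * n + 1).

(** Matrix coefficient <n',k'| pi_s(b) |n,k>, s = +1 or -1 (for pi_+ / pi_-). *)
Definition pi_b (q s : R) (n k n' k' : nat) : R :=
  let l := lval n in let m := mval n k in
  if negb (valid n k && valid n' k') then 0 else
  if Nat.eqb n' (S n) && Nat.eqb k' (S k) then
    - Rpower q (m + 1) * sqrt (qnum q (l + m + 1) * qnum q (l - m + 1)) / qnum q (2 * l + 2)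
  else if Nat.eqb (S n') n && Nat.eqb (S k') k then
    - Rpower q (m + 1) * sqrt (qnum q (l + m) * qnum q (l - m)) / qnum q (2 * l)
  else if Nat.eqb n' n && Nat.eqb k' k then
    s * (qnum q (l - m + 1) * qnum q (l + m) - q ^ 2 * qnum q (l - m) * qnum q (l + m + 1))
      / (qnum q (2 * l) * qnum q (2 * l + 2))
  else 0.

Definition pi_a (q s : R) (n k n' k' : nat) : R :=
  let l := lval n in let m := mval n k in
  if negb (valid n k && valid n' k') then 0 else
  if Nat.eqb n' (S n) && Nat.eqb k' (S (S k)) then
    Rpower q (m - l - / 2) * sqrt (qnum q (l + m + 1) * qnum q (l + m + 2)) / qnum q (2 * l + 2)
  else if Nat.eqb (S n') n && Nat.eqb k' k then
    - Rpower q (m + l + / 2) * sqrt (qnum q (l - m - 1) * qnum q (l - m)) / qnum q (2 * l)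
  else if Nat.eqb n' n && Nat.eqb k' (S k) then
    s * (1 + q ^ 2) * Rpower q (m - / 2) / (qnum q (2 * l) * qnum q (2 * l + 2))
      * sqrt (qnum q (l + m + 1) * qnum q (l - m))
  else 0.

(** pi_s(a-star) = adjoint of pi_s(a); coefficients are real, so it is the transpose. *)
Definition pi_astar (q s : R) (n k n' k' : nat) : R := pi_a q s n' k' n k.

Definition pi_one (n k n' k' : nat) : R :=
  if valid n k && Nat.eqb n' n && Nat.eqb k' k then 1 else 0.

(** Elements of the linear span of 1, a, a-star, b in A(S^2_q)
    (enough to write the entries of p'). *)
Record elt := mkElt { c_one : R; c_a : R; c_astar : R; c_b : R }.

Definition pi_s (q s : R) (x : elt) (n k n' k' : nat) : R :=
  c_one x * pi_one n k n' k' + c_a x * pi_a q s n k n' k'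
  + c_astar x * pi_astar q s n k n' k' + c_b x * pi_b q s n k n' k'.

Definition rho_minus (q : R) (x : elt) (n k n' k' : nat) : R :=
  (pi_s q 1 x n k n' k' - pi_s q (-1) x n k n' k') / 2.

Definition diag_shell (T : nat -> nat -> nat -> nat -> R) (n : nat) : R :=
  sum_f_R0 (fun k => T n k n k) (2 * n + 1).
Definition absdiag_shell (T : nat -> nat -> nat -> nat -> R) (n : nat) : R :=
  sum_f_R0 (fun k => Rabs (T n k n k)) (2 * n + 1).

Definition Trace (T : nat -> nat -> nat -> nat -> R) : R := Series (diag_shell T).

Definition ch0 (q : R) (x : elt) : R := 2 * Trace (rho_minus q x).

Definition pprime (q : R) (i j : nat) : elt :=
  match i, j with
  | O, O => mkElt (/2) 0 0 (/2)
  | O, _ => mkElt 0 0 (/2) 0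
  | _, O => mkElt 0 (/2) 0 0
  | _, _ => mkElt (/2) 0 0 (- / (2 * q ^ 2))
  end.

Definition chern_pairing (q : R) (p : nat -> nat -> elt) : R :=
  ch0 q (p 0%nat 0%nat) + ch0 q (p 1%nat 1%nat).

From Stdlib Require Import Reals Lra Lia.
From Coquelicot Require Import Coquelicot.
Open Scope R_scope.

(* Only the sign-dependent diagonal term of pi_±(b) survives on the diagonal of
   rho_- = (pi_+ - pi_-)/2, so Trace rho_-(x) = c_b(x) Trace rho_-(b), and the pairing
   is (1/2 - 1/(2q^2)) * 2 Trace rho_-(b).  With the q-integers [j], the q-convolution
   identity
     (q - 1/q)^2 sum_{k=0}^{M} [M-k][k] = (M+1)(q^M + q^-M) - 2[M+1]
   shows that the diagonal of rho_-(b) sums over the shell l = n + 1/2 to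
   q^2/(1-q^2) (2l/[2l] - (2l+2)/[2l+2]).  As N/[N] -> 0 this telescopes to
   Trace rho_-(b) = q^2/(1-q^2), so the pairing is (q^2 - 1)/(1 - q^2) = -1.  The absolute
   diagonal sums are dominated by (1+q^2)/(1-q^2) times the same telescoping series. *)

Lemma is_series_telescoping (u : nat -> R) (l : R) :
  is_lim_seq u l -> is_series (fun n => u n - u (S n)) (u O - l).
Proof.
  intro Hu.
  assert (Hpartial : forall N, sum_n (fun n => u n - u (S n)) N = u O - u (S N)).
  { intro N. rewrite sum_n_Reals.
    induction N as [|N IH]; [simpl | rewrite tech5, IH; simpl]; ring. }
  enough (H : is_lim_seq (sum_n (fun n => u n - u (S n))) (u O - l)) by exact H.
  apply (is_lim_seq_ext (fun N => u O - u (S N))); [intro N; symmetry; apply Hpartial |].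
  apply is_lim_seq_minus'; [apply is_lim_seq_const | exact (proj1 (is_lim_seq_incr_1 u l) Hu)].
Qed.

Lemma is_lim_seq_INR_mult_pow (x : R) :
  Rabs x < 1 -> is_lim_seq (fun n => INR n * x ^ n) 0.
Proof.
  intro Hx.
  (* (n+1) x^n are the coefficients of the derivative of the geometric series. *)
  assert (Hradius : CV_radius (fun _ => 1) = 1).
  { rewrite (CV_radius_finite_DAlembert _ 1); [now rewrite Rinv_1 | intro; lra | lra |].
    apply (is_lim_seq_ext (fun _ => 1)); [| apply is_lim_seq_const].
    intro; unfold Rdiv; rewrite Rinv_1, Rmult_1_r, Rabs_R1; reflexivity. }
  assert (Hderiv : ex_series (fun n => PS_derive (fun _ => 1) n * x ^ n)).
  { apply ex_series_Rabs, CV_disk_inside. now rewrite CV_radius_derive, Hradius. }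
  apply is_lim_seq_incr_1.
  apply (is_lim_seq_ext (fun n => x * (PS_derive (fun _ => 1) n * x ^ n))).
  { intro n. unfold PS_derive. simpl pow. ring. }
  rewrite <- (Rmult_0_r x).
  apply is_lim_seq_mult'; [apply is_lim_seq_const | now apply ex_series_lim_0].
Qed.

Definition qint (q : R) (j : nat) : R := (q ^ j - / q ^ j) / (q - / q).

Definition qint_conv (q : R) (M : nat) : R :=
  sum_f_R0 (fun k => qint q (M - k) * qint q k) M.

Lemma qint0 (q : R) : qint q 0 = 0.
Proof. unfold qint. simpl. rewrite Rinv_1. unfold Rdiv. ring. Qed.

Lemma sum_qint_pairs (q c : R) (N : nat) :
  sum_f_R0 (fun k => qint q (S N - k) * qint q k + qint q (N - k) * qint q (S k) * c) N
  = (1 + c) * qint_conv q (S N).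
Proof.
  transitivity (qint_conv q (S N) + c * qint_conv q (S N)); [| ring].
  unfold qint_conv. rewrite sum_plus, <- scal_sum.
  f_equal; [| f_equal].
  - rewrite tech5, Nat.sub_diag, qint0. ring.
  - rewrite (decomp_sum _ (S N)) by lia. rewrite qint0, Rmult_0_r, Rplus_0_l. reflexivity.
Qed.

Section QIntegers.

Variable q : R.
Hypothesis q_neq0 : q <> 0.
Hypothesis q_neq_inv : q - / q <> 0.

Lemma sqr_neq1 : q * q <> 1.
Proof.
  intro Hsq. apply q_neq_inv.
  replace (q - / q) with ((q * q - 1) / q) by (field; auto).
  rewrite Hsq. unfold Rdiv. ring.
Qed.

Lemma qint_inv (j : nat) : qint (/ q) j = qint q j.
Proof.
  assert (Hqj := pow_nonzero q j q_neq0).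
  unfold qint. rewrite pow_inv, !Rinv_inv.
  assert (Hsq := sqr_neq1).
  field. repeat split; auto; lra.
Qed.

Lemma sum_pow_sub_div (M : nat) :
  sum_f_R0 (fun k => q ^ (M - k) / q ^ k) M = qint q (S M).
Proof.
  assert (Hsq := sqr_neq1).
  induction M as [|M IH].
  - unfold qint. simpl. field. split; auto; lra.
  - rewrite tech5, Nat.sub_diag.
    rewrite (sum_eq _ (fun k => q ^ (M - k) / q ^ k * q)).
    2:{ intros k Hk. replace (S M - k)%nat with (S (M - k)) by lia.
        rewrite <- tech_pow_Rmult. unfold Rdiv. ring. }
    rewrite <- scal_sum, IH.
    assert (HqM := pow_nonzero q M q_neq0).
    unfold qint. simpl. field. repeat split; auto; lra.
Qed.

Lemma qint_mul_expand (M k : nat) : (k <= M)%nat ->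
  (q - / q) ^ 2 * (qint q (M - k) * qint q k)
  = q ^ M + / q ^ M - (q ^ (M - k) / q ^ k + q ^ k / q ^ (M - k)).
Proof.
  intro Hk.
  replace (q ^ M) with (q ^ (M - k) * q ^ k) by (rewrite <- pow_add; f_equal; lia).
  assert (H1 := pow_nonzero q (M - k) q_neq0).
  assert (H2 := pow_nonzero q k q_neq0).
  assert (Hsq := sqr_neq1).
  unfold qint. field. repeat split; auto; lra.
Qed.

End QIntegers.

Lemma qint_conv_closed (q : R) (M : nat) : q <> 0 -> q - / q <> 0 ->
  (q - / q) ^ 2 * qint_conv q M = INR (S M) * (q ^ M + / q ^ M) - 2 * qint q (S M).
Proof.
  intros q_neq0 q_neq_inv.
  unfold qint_conv. rewrite scal_sum.
  rewrite (sum_eq _ (fun k => q ^ M + / q ^ M - (q ^ (M - k) / q ^ k + q ^ k / q ^ (M - k)))).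
  2:{ intros k Hk. rewrite Rmult_comm. now apply qint_mul_expand. }
  rewrite minus_sum, sum_cte, sum_plus, sum_pow_sub_div by auto.
  (* The reversed geometric sum is the same sum for 1/q, and [j] is invariant under q -> 1/q. *)
  rewrite (sum_eq _ (fun k => (/ q) ^ (M - k) / (/ q) ^ k)).
  2:{ intros k Hk. rewrite !pow_inv. field. split; apply pow_nonzero; auto. }
  rewrite sum_pow_sub_div, qint_inv; auto.
  - ring.
  - now apply Rinv_neq_0_compat.
  - rewrite Rinv_inv. intro H. apply q_neq_inv. lra.
Qed.

Lemma one_lt_Rinv (x : R) : 0 < x < 1 -> 1 < / x.
Proof. intro Hx. rewrite <- Rinv_1. apply Rinv_lt_contravar; lra. Qed.

Section PodlesSphere.

Variable q : R.
Hypothesis q_pos : 0 < q.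
Hypothesis q_lt1 : q < 1.

Lemma pow_sub_inv_neg (j : nat) : (0 < j)%nat -> q ^ j - / q ^ j < 0.
Proof.
  intro Hj.
  destruct (pow_lt_1_compat q j) as [_ Hlt]; [lra | exact Hj |].
  assert (Hinv := one_lt_Rinv (q ^ j) (conj (pow_lt q j q_pos) Hlt)).
  lra.
Qed.

Lemma sub_inv_neg : q - / q < 0.
Proof. assert (H := pow_sub_inv_neg 1 Nat.lt_0_1). now rewrite pow_1 in H. Qed.

Lemma qint_pos (j : nat) : (0 < j)%nat -> 0 < qint q j.
Proof.
  intro Hj. unfold qint, Rdiv.
  assert (Hnum := pow_sub_inv_neg j Hj).
  assert (Hden := Rinv_lt_0_compat _ sub_inv_neg).
  nra.
Qed.

Lemma qint_ge0 (j : nat) : 0 <= qint q j.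
Proof.
  destruct j as [|j]; [rewrite qint0; lra |].
  apply Rlt_le, qint_pos. lia.
Qed.

Lemma qnum_INR (j : nat) : qnum q (INR j) = qint q j.
Proof. unfold qnum, qint. now rewrite Rpower_Ropp, Rpower_pow. Qed.

(* At |l,m> with l = n + 1/2, m = k - l, the arguments l-m+1, l+m, l-m, l+m+1, 2l, 2l+2
   of the q-numbers in pi_b are 2n+2-k, k, 2n+1-k, k+1, 2n+1, 2n+3. *)
Definition b_diag (n k : nat) : R :=
  (qint q (2 * n + 2 - k) * qint q k - q ^ 2 * qint q (2 * n + 1 - k) * qint q (S k))
  / (qint q (2 * n + 1) * qint q (2 * n + 3)).

Lemma rho_minus_diag (x : elt) (n k : nat) : (k <= 2 * n + 1)%nat ->
  rho_minus q x n k n k = c_b x * b_diag n k.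
Proof.
  intro Hk.
  assert (Hvalid : valid n k = true) by (apply Nat.leb_le; lia).
  assert (E1 : Nat.eqb n (S n) = false) by (apply Nat.eqb_neq; lia).
  assert (E2 : Nat.eqb (S n) n = false) by (apply Nat.eqb_neq; lia).
  assert (E3 : Nat.eqb k (S k) = false) by (apply Nat.eqb_neq; lia).
  assert (E4 : Nat.eqb k (S (S k)) = false) by (apply Nat.eqb_neq; lia).
  assert (E5 : Nat.eqb (S k) k = false) by (apply Nat.eqb_neq; lia).
  unfold rho_minus, pi_s, pi_one, pi_astar, pi_a, pi_b.
  rewrite Hvalid, E1, E2, E3, E4, E5, !Nat.eqb_refl. cbv zeta. cbn [negb andb].
  unfold b_diag, mval, lval.
  replace (INR n + / 2 - (INR k - (INR n + / 2)) + 1) with (INR (2 * n + 2 - k))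
    by (rewrite minus_INR, plus_INR, mult_INR by lia; simpl; lra).
  replace (INR n + / 2 - (INR k - (INR n + / 2))) with (INR (2 * n + 1 - k))
    by (rewrite minus_INR, plus_INR, mult_INR by lia; simpl; lra).
  replace (INR n + / 2 + (INR k - (INR n + / 2)) + 1) with (INR (S k)) by (rewrite S_INR; lra).
  replace (INR n + / 2 + (INR k - (INR n + / 2))) with (INR k) by lra.
  replace (2 * (INR n + / 2) + 2) with (INR (2 * n + 3)) by (rewrite plus_INR, mult_INR; simpl; lra).
  replace (2 * (INR n + / 2)) with (INR (2 * n + 1)) by (rewrite plus_INR, mult_INR; simpl; lra).
  rewrite !qnum_INR.
  assert (Hd1 := qint_pos (2 * n + 1) ltac:(lia)).
  assert (Hd2 := qint_pos (2 * n + 3) ltac:(lia)).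
  field. lra.
Qed.

Definition shell_weight (n : nat) : R :=
  qint_conv q (2 * n + 2) / (qint q (2 * n + 1) * qint q (2 * n + 3)).

Lemma sum_b_diag (n : nat) :
  sum_f_R0 (b_diag n) (2 * n + 1) = (1 - q ^ 2) * shell_weight n.
Proof.
  assert (Hd1 := qint_pos (2 * n + 1) ltac:(lia)).
  assert (Hd2 := qint_pos (2 * n + 3) ltac:(lia)).
  unfold b_diag, shell_weight, Rdiv.
  replace (2 * n + 2)%nat with (S (2 * n + 1)) by lia.
  rewrite <- scal_sum.
  rewrite (sum_eq _ (fun k => qint q (S (2 * n + 1) - k) * qint q k
                              + qint q (2 * n + 1 - k) * qint q (S k) * - q ^ 2))
    by (intros; ring).
  rewrite sum_qint_pairs. field. lra.
Qed.

Lemma sum_abs_b_diag_le (n : nat) :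
  sum_f_R0 (fun k => Rabs (b_diag n k)) (2 * n + 1) <= (1 + q ^ 2) * shell_weight n.
Proof.
  set (den := qint q (2 * n + 1) * qint q (2 * n + 3)).
  assert (Hden : 0 < / den).
  { apply Rinv_0_lt_compat, Rmult_lt_0_compat; apply qint_pos; lia. }
  apply Rle_trans with (sum_f_R0 (fun k => (qint q (S (2 * n + 1) - k) * qint q k
                          + qint q (2 * n + 1 - k) * qint q (S k) * q ^ 2) * / den) (2 * n + 1)).
  - apply sum_Rle. intros k Hk.
    unfold b_diag, Rdiv. fold den.
    replace (2 * n + 2)%nat with (S (2 * n + 1)) by lia.
    rewrite Rabs_mult, (Rabs_pos_eq (/ den)) by lra.
    apply Rmult_le_compat_r; [lra |].
    assert (Ha := Rmult_le_pos _ _ (qint_ge0 (S (2 * n + 1) - k)) (qint_ge0 k)).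
    assert (Hb := Rmult_le_pos _ _ (qint_ge0 (2 * n + 1 - k)) (qint_ge0 (S k))).
    assert (Hq2 := pow2_ge_0 q).
    apply Rabs_le. split; nra.
  - rewrite <- scal_sum, sum_qint_pairs.
    unfold shell_weight, Rdiv. fold den.
    replace (2 * n + 2)%nat with (S (2 * n + 1)) by lia.
    right. ring.
Qed.

Definition ratio_qint (N : nat) : R := INR N / qint q N.

Lemma shell_weight_telescoping (n : nat) :
  shell_weight n
  = q ^ 2 / (1 - q ^ 2) ^ 2 * (ratio_qint (2 * n + 1) - ratio_qint (2 * n + 3)).
Proof.
  assert (Hconv := qint_conv_closed q (2 * n + 2) ltac:(lra) (Rlt_not_eq _ _ sub_inv_neg)).
  unfold shell_weight, ratio_qint.
  replace (qint_conv q (2 * n + 2))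
    with ((INR (S (2 * n + 2)) * (q ^ (2 * n + 2) + / q ^ (2 * n + 2))
           - 2 * qint q (S (2 * n + 2))) / (q - / q) ^ 2)
    by (rewrite <- Hconv; field; split; nra).
  replace (S (2 * n + 2)) with (2 * n + 3)%nat by lia.
  replace (INR (2 * n + 3)) with (INR (2 * n + 1) + 2) by (rewrite !plus_INR; simpl; ring).
  replace (2 * n + 2)%nat with (2 * n + 1 + 1)%nat by lia.
  replace (2 * n + 3)%nat with (2 * n + 1 + 2)%nat by lia.
  unfold qint.
  rewrite (pow_add q (2 * n + 1) 1), (pow_add q (2 * n + 1) 2), pow_1.
  assert (Hy := pow_lt_1_compat q (2 * n + 1) ltac:(lra) ltac:(lia)).
  assert (Hy0 := pow_lt q (2 * n + 1) q_pos).
  clear Hconv. revert Hy Hy0.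
  generalize (q ^ (2 * n + 1)) (INR (2 * n + 1)). intros y r Hy Hy0.
  assert (Hq2 := pow_lt_1_compat q 2 ltac:(lra) ltac:(lia)).
  assert (Hq20 := pow_lt q 2 q_pos).
  assert (Hyq : 0 < y * q ^ 2 < 1) by (split; nra).
  field. repeat split; nra.
Qed.

Lemma is_lim_seq_ratio_qint : is_lim_seq ratio_qint 0.
Proof.
  assert (Hq : Rabs q < 1) by (rewrite Rabs_pos_eq; lra).
  apply (is_lim_seq_ext (fun N => INR N * q ^ N * ((q - / q) / (q ^ N * q ^ N - 1)))).
  { intro N. unfold ratio_qint, qint. destruct N as [|N].
    - simpl. unfold Rdiv. ring.
    - assert (HN := pow_lt_1_compat q (S N) ltac:(lra) (Nat.lt_0_succ N)).
      assert (HN0 := pow_lt q (S N) q_pos).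
      field. repeat split; nra. }
  rewrite <- (Rmult_0_l ((q - / q) / (0 * 0 - 1))).
  apply is_lim_seq_mult'; [now apply is_lim_seq_INR_mult_pow |].
  apply is_lim_seq_div'; [apply is_lim_seq_const | | lra].
  apply is_lim_seq_minus'; [| apply is_lim_seq_const].
  apply is_lim_seq_mult'; now apply is_lim_seq_geom.
Qed.

Lemma is_series_shell_weight : is_series shell_weight (q ^ 2 / (1 - q ^ 2) ^ 2).
Proof.
  assert (Hlim : is_lim_seq (fun n => ratio_qint (2 * n + 1)) 0).
  { apply (is_lim_seq_subseq ratio_qint 0 (fun n => 2 * n + 1)%nat).
    - apply eventually_subseq. intro. lia.
    - exact is_lim_seq_ratio_qint. }
  assert (Hratio1 : ratio_qint (2 * 0 + 1) = 1).
  { unfold ratio_qint, qint. simpl. field. split; nra. }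
  assert (Hscaled := is_series_scal_l (q ^ 2 / (1 - q ^ 2) ^ 2) _ _
                       (is_series_telescoping _ _ Hlim)).
  cbn beta in Hscaled. rewrite Hratio1, Rminus_0_r in Hscaled.
  replace (q ^ 2 / (1 - q ^ 2) ^ 2) with (scal (q ^ 2 / (1 - q ^ 2) ^ 2) 1)
    by apply Rmult_1_r.
  refine (is_series_ext _ _ _ _ Hscaled).
  intro n. rewrite shell_weight_telescoping.
  replace (2 * S n + 1)%nat with (2 * n + 3)%nat by lia. reflexivity.
Qed.

Lemma diag_shell_rho_minus (x : elt) (n : nat) :
  diag_shell (rho_minus q x) n = c_b x * ((1 - q ^ 2) * shell_weight n).
Proof.
  unfold diag_shell. rewrite <- sum_b_diag, scal_sum.
  apply sum_eq. intros k Hk.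
  rewrite rho_minus_diag by lia. ring.
Qed.

Lemma Trace_rho_minus (x : elt) : Trace (rho_minus q x) = c_b x * (q ^ 2 / (1 - q ^ 2)).
Proof.
  assert (Hq2 := pow_lt_1_compat q 2 ltac:(lra) ltac:(lia)).
  unfold Trace.
  rewrite (Series_ext _ _ (diag_shell_rho_minus x)), !Series_scal_l.
  rewrite (is_series_unique _ _ is_series_shell_weight).
  field. lra.
Qed.

Lemma ex_series_absdiag_shell_rho_minus (x : elt) :
  ex_series (absdiag_shell (rho_minus q x)).
Proof.
  apply (@ex_series_le R_AbsRing R_CompleteNormedModule _
           (fun n => Rabs (c_b x) * (1 + q ^ 2) * shell_weight n)).
  - intro n. change norm with Rabs.
    rewrite Rabs_pos_eq by (apply cond_pos_sum; intro; apply Rabs_pos).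
    unfold absdiag_shell. rewrite Rmult_assoc.
    apply Rle_trans with (Rabs (c_b x) * sum_f_R0 (fun k => Rabs (b_diag n k)) (2 * n + 1)).
    + right. rewrite scal_sum. apply sum_eq. intros k Hk.
      rewrite rho_minus_diag, Rabs_mult by lia. ring.
    + apply Rmult_le_compat_l; [apply Rabs_pos | apply sum_abs_b_diag_le].
  - apply (@ex_series_scal_l R_AbsRing R_NormedModule).
    exists (q ^ 2 / (1 - q ^ 2) ^ 2). exact is_series_shell_weight.
Qed.

End PodlesSphere.

Theorem mainTheorem11 (q : R) (hq0 : 0 < q) (hq1 : q < 1) :
  (forall i : nat, (i < 2)%nat ->
     ex_series (absdiag_shell (rho_minus q (pprime q i i)))) /\
  chern_pairing q (pprime q) = -1.
Proof.
  split.
  - intros i _. now apply ex_series_absdiag_shell_rho_minus.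
  - unfold chern_pairing, ch0.
    rewrite !Trace_rho_minus by assumption. simpl.
    field. split; nra.
Qed.
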